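(* Let $L$ be an $S$-Noetherian lattice, where $S$ is a multiplicatively closed subset of $L$ with $1\in S$, $0\notin S$. Then every radical element $a$ of $L$ (i.e., $a=\sqrt a$) such that $t\not\le a$ for all $t\in S$ is the meet of finitely many $S$-prime elements.
   Context: A multiplicative lattice is a complete lattice with a commutative, associative multiplication distributing over arbitrary joins, with $1$ as identity; $L_*$ is the set of compact elements; $(a:b)=\bigvee\{x\mid xb\le a\}$. An element $m$ is principal if $a\wedge mb=m((a:m)\wedge b)$ and $a\vee(b:m)=(am\vee b):m$ for all $a,b$. An $r$-lattice is a modular, principally generated, compactly generated multiplicative lattice with $1$ compact. A multiplicatively closed subset is a nonempty $S\subseteq L_*$ closed under multiplication. An element $a$ is $S$-compact if $sa\le b\le a$ for some compact $b$ and $s\in S$; an $S$-Noetherian lattice is an $r$-lattice in which every element is $S$-compact. $\sqrt a=\bigvee\{x\in L_*\mid x^n\le a\text{ for some }n\in\mathbb{Z}^+\}$. A proper element $p$ with $t\not\le p$ for all $t\in S$ is $S$-prime if there exists $s\in S$ such that for all $a,b\in L$, $ab\le p$ implies $sa\le p$ or $sb\le p$. *)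

From Stdlib Require Import List Arith.

Record mlattice := MLattice {
  car :> Type;
  le : car -> car -> Prop;
  sup : (car -> Prop) -> car;
  mul : car -> car -> car;
  one : car;
  le_refl : forall x, le x x;
  le_trans : forall x y z, le x y -> le y z -> le x z;
  le_antisym : forall x y, le x y -> le y x -> x = y;
  sup_ub : forall (X : car -> Prop) x, X x -> le x (sup X);
  sup_least : forall (X : car -> Prop) u, (forall x, X x -> le x u) -> le (sup X) u;
  one_top : forall x, le x one;
  mul_comm : forall x y, mul x y = mul y x;
  mul_assoc : forall x y z, mul x (mul y z) = mul (mul x y) z;
  mul_one : forall x, mul one x = x;
  mul_sup : forall x (X : car -> Prop),
      mul x (sup X) = sup (fun y => exists z, X z /\ y = mul x z)
}.

Arguments le {m}.
Arguments sup {m}.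
Arguments mul {m}.
Arguments one {m}.

Section Defs.
Variable L : mlattice.

Definition bot : L := sup (fun _ => False).
Definition join (a b : L) : L := sup (fun x => x = a \/ x = b).
Definition inf (X : L -> Prop) : L := sup (fun x => forall y, X y -> le x y).
Definition meet (a b : L) : L := inf (fun x => x = a \/ x = b).
Definition inf_list (l : list L) : L := inf (fun x => In x l).

Fixpoint pow (x : L) (n : nat) : L :=
  match n with 0 => one | S k => mul x (pow x k) end.

Definition compact (c : L) : Prop :=
  forall X : L -> Prop, le c (sup X) ->
    exists l : list L, (forall y, In y l -> X y) /\ le c (sup (fun y => In y l)).

Definition colon (a b : L) : L := sup (fun x => le (mul x b) a).

Definition principal (m : L) : Prop :=
  (forall a b, meet a (mul m b) = mul m (meet (colon a m) b)) /\
  (forall a b, join a (colon b m) = colon (join (mul a m) b) m).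

Definition modular : Prop :=
  forall a b c, le a c -> join a (meet b c) = meet (join a b) c.

Definition principally_generated : Prop :=
  forall a, a = sup (fun x => principal x /\ le x a).

Definition compactly_generated : Prop :=
  forall a, a = sup (fun x => compact x /\ le x a).

Definition r_lattice : Prop :=
  modular /\ principally_generated /\ compactly_generated /\ compact one.

Definition mult_closed (S : L -> Prop) : Prop :=
  (exists s, S s) /\ (forall s, S s -> compact s) /\
  (forall s t, S s -> S t -> S (mul s t)).

Definition S_compact (S : L -> Prop) (a : L) : Prop :=
  exists s b, S s /\ compact b /\ le (mul s a) b /\ le b a.

Definition S_noetherian (S : L -> Prop) : Prop :=
  r_lattice /\ forall a, S_compact S a.

Definition rad (a : L) : L :=
  sup (fun x => compact x /\ exists n, 1 <= n /\ le (pow x n) a).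

Definition proper (p : L) : Prop := p <> one.

Definition S_prime (S : L -> Prop) (p : L) : Prop :=
  proper p /\ (forall t, S t -> ~ le t p) /\
  exists s, S s /\ forall a b, le (mul a b) p -> le (mul s a) p \/ le (mul s b) p.

End Defs.

(* Call [c] admissible if it is radical, S-saturated ([s w <= c] with [s] in
   [S] forces [w <= c]) and disjoint from [S].  Admissible elements are finite
   meets of S-primes: otherwise Zorn's lemma yields a maximal counterexample
   [c] (a chain of saturated elements is bounded by one of its members, since
   the join [J] of the chain satisfies [s J <= b] for a compact [b <= J]).
   Such a [c] is not prime, so [x y <= c] with [x, y] not below [c], and
   [c = (c : x) /\ (c : (c : x))] splits [c] into two strictly larger
   admissible elements, one of which is again a counterexample.
   For a radical [a], S-compactness of the join of all [(a : s)] gives [v] in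
   [S] with [(a : v)] saturated, hence admissible, and by modularity
   [a = (a : v) /\ (a \/ v)]; meeting each S-prime component of [(a : v)]
   with [a \/ v] keeps it S-prime. *)

From Stdlib Require Import List Classical.
From mathcomp Require boolp classical_sets.
Set Bullet Behavior "Strict Subproofs".

Section Lattice.
Variable L : mlattice.
Implicit Types a b c d e p q s t u v w x y z : L.

Lemma join_of_le x y : le x y -> join L x y = y.
Proof.
  intro Hxy. apply le_antisym.
  - apply sup_least. intros w [-> | ->]; [exact Hxy | apply le_refl].
  - apply sup_ub. now right.
Qed.

Lemma mul_le_mono_l x y z : le x y -> le (mul z x) (mul z y).
Proof.
  intro Hxy. rewrite <- (join_of_le x y Hxy). unfold join. rewrite mul_sup.
  apply sup_ub. exists x. split; [now left | reflexivity].
Qed.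

Lemma mul_le_mono_r x y z : le x y -> le (mul x z) (mul y z).
Proof. intro Hxy. rewrite (mul_comm L x), (mul_comm L y). now apply mul_le_mono_l. Qed.

Lemma mul_le_mono x x' y y' : le x x' -> le y y' -> le (mul x y) (mul x' y').
Proof.
  intros Hx Hy. apply le_trans with (mul x' y); [apply mul_le_mono_r | apply mul_le_mono_l]; assumption.
Qed.

Lemma mul_le_r x y : le (mul x y) y.
Proof. rewrite <- (mul_one L y) at 2. apply mul_le_mono_r, one_top. Qed.

Lemma mul_le_l x y : le (mul x y) x.
Proof. rewrite mul_comm. apply mul_le_r. Qed.

Lemma le_colon a b z : le z (colon L a b) <-> le (mul z b) a.
Proof.
  split; intro Hz.
  - apply le_trans with (mul (colon L a b) b); [now apply mul_le_mono_r |].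
    unfold colon. rewrite mul_comm, mul_sup. apply sup_least.
    intros y [w [Hw ->]]. now rewrite mul_comm.
  - now apply sup_ub.
Qed.

Lemma colon_mul_le a b : le (mul (colon L a b) b) a.
Proof. apply le_colon, le_refl. Qed.

Lemma le_self_colon a b : le a (colon L a b).
Proof. apply le_colon, mul_le_l. Qed.

Lemma colon_le_colon_mul a s t : le (colon L a s) (colon L a (mul s t)).
Proof.
  apply le_colon. rewrite mul_assoc. eapply le_trans; [apply mul_le_l | apply colon_mul_le].
Qed.

Lemma le_meet a b z : le z (meet L a b) <-> le z a /\ le z b.
Proof.
  split; intro Hz.
  - split; (eapply le_trans; [exact Hz |]); apply sup_least; intros x Hx; apply Hx; auto.
  - apply sup_ub. intros y [-> | ->]; apply Hz.
Qed.

Lemma meet_le_l a b : le (meet L a b) a.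
Proof. apply (le_meet a b), le_refl. Qed.

Lemma meet_le_r a b : le (meet L a b) b.
Proof. apply (le_meet a b), le_refl. Qed.

Lemma join_le a b z : le (join L a b) z <-> le a z /\ le b z.
Proof.
  split; intro Hz.
  - split; (eapply le_trans; [| exact Hz]); apply sup_ub; auto.
  - apply sup_least. intros y [-> | ->]; apply Hz.
Qed.

Lemma le_join_r a b : le b (join L a b).
Proof. apply sup_ub. now right. Qed.

Lemma le_inf_list (l : list L) z : le z (inf_list L l) <-> forall y, In y l -> le z y.
Proof.
  split; intro Hz.
  - intros y Hy. eapply le_trans; [exact Hz |]. apply sup_least. intros x Hx. now apply Hx.
  - now apply sup_ub.
Qed.

Lemma inf_list_le (l : list L) y : In y l -> le (inf_list L l) y.
Proof. intro Hy. now apply (le_inf_list l (inf_list L l)); [apply le_refl |]. Qed.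

Lemma inf_list_app (l1 l2 : list L) :
  inf_list L (l1 ++ l2) = meet L (inf_list L l1) (inf_list L l2).
Proof.
  apply le_antisym.
  - apply le_meet; split; apply le_inf_list; intros y Hy; apply inf_list_le, in_or_app; auto.
  - apply le_inf_list. intros y Hy. apply in_app_or in Hy as [Hy | Hy].
    + eapply le_trans; [apply meet_le_l | now apply inf_list_le].
    + eapply le_trans; [apply meet_le_r | now apply inf_list_le].
Qed.

Lemma inf_list_map_meet p0 (ps : list L) q :
  inf_list L (map (fun p => meet L p q) (p0 :: ps)) = meet L (inf_list L (p0 :: ps)) q.
Proof.
  apply le_antisym.
  - apply le_meet. split.
    + apply le_inf_list. intros p Hp. eapply le_trans; [| apply meet_le_l].
      apply inf_list_le, in_map_iff. now exists p.
    + eapply le_trans; [| apply (meet_le_r p0)]. apply inf_list_le. now left.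
  - apply le_inf_list. intros y Hy. apply in_map_iff in Hy as [p [<- Hp]].
    apply le_meet. split; [| apply meet_le_r].
    eapply le_trans; [apply meet_le_l | now apply inf_list_le].
Qed.

Lemma pow_le_mono x y n : le x y -> le (pow L x n) (pow L y n).
Proof. intro Hxy. induction n; simpl; [apply le_refl | now apply mul_le_mono]. Qed.

Lemma pow_mul x y n : pow L (mul x y) n = mul (pow L x n) (pow L y n).
Proof.
  induction n; simpl.
  - now rewrite mul_one.
  - rewrite IHn, !mul_assoc. f_equal.
    rewrite <- !mul_assoc. f_equal. apply mul_comm.
Qed.

Definition radical c : Prop := forall w n, le (pow L w (S n)) c -> le w c.

Lemma radical_of_eq_rad a :
  compactly_generated L -> a = rad L a -> radical a.
Proof.
  intros Hcg Ha w n Hw. rewrite (Hcg w). apply sup_least. intros x [Hx Hxw].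
  rewrite Ha. apply sup_ub. split; [exact Hx |].
  exists (S n). split; [apply le_n_S, le_0_n |].
  eapply le_trans; [apply pow_le_mono; exact Hxw | exact Hw].
Qed.

Lemma radical_meet_le c x y : radical c -> le (mul x y) c -> le (meet L x y) c.
Proof.
  intros Hc Hxy. apply (Hc _ 1). simpl. rewrite (mul_comm L _ one), mul_one.
  eapply le_trans; [| exact Hxy]. apply mul_le_mono; [apply meet_le_l | apply meet_le_r].
Qed.

Lemma colon_radical c x : radical c -> radical (colon L c x).
Proof.
  intros Hc w n Hw. rewrite le_colon in Hw. apply le_colon, (Hc _ n).
  rewrite pow_mul. eapply le_trans; [| exact Hw]. apply mul_le_mono_l. simpl. apply mul_le_l.
Qed.

Lemma radical_eq_meet_colon c x :
  radical c -> c = meet L (colon L c x) (colon L c (colon L c x)).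
Proof.
  intro Hc. apply le_antisym.
  - apply le_meet. split; apply le_self_colon.
  - apply radical_meet_le; [exact Hc |]. rewrite mul_comm. apply colon_mul_le.
Qed.

Lemma radical_eq_meet_colon_join a v :
  modular L -> radical a -> a = meet L (colon L a v) (join L a v).
Proof.
  intros Hmod Ha. apply le_antisym.
  - apply le_meet. split; [apply le_self_colon | apply sup_ub; now left].
  - assert (Hmj : le (meet L (colon L a v) (join L a v)) (join L a (meet L v (colon L a v)))).
    { rewrite (Hmod a v (colon L a v) (le_self_colon a v)).
      apply le_meet. split; [apply meet_le_r | apply meet_le_l]. }
    eapply le_trans; [exact Hmj |]. apply join_le. split; [apply le_refl |].
    apply radical_meet_le; [exact Ha |]. rewrite mul_comm. apply colon_mul_le.
Qed.

Definition directed (C : L -> Prop) : Prop :=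
  forall x y, C x -> C y -> exists z, C z /\ le x z /\ le y z.

Definition chain (C : L -> Prop) : Prop :=
  forall x y, C x -> C y -> le x y \/ le y x.

Lemma chain_directed (C : L -> Prop) : chain C -> directed C.
Proof.
  intros HC x y Hx Hy. destruct (HC x y Hx Hy) as [Hxy | Hyx].
  - exists y. auto using le_refl.
  - exists x. auto using le_refl.
Qed.

Lemma directed_list_bound (C : L -> Prop) (l : list L) :
  directed C -> (exists x, C x) -> (forall y, In y l -> C y) ->
  exists z, C z /\ forall y, In y l -> le y z.
Proof.
  intros Hdir [x0 Hx0]. induction l as [| y l IH]; intro Hl.
  - exists x0. split; [exact Hx0 | intros y []].
  - destruct IH as [x [Hx Hlx]]; [intros z Hz; apply Hl; now right |].
    destruct (Hdir x y Hx (Hl y (or_introl eq_refl))) as [z [Hz [Hxz Hyz]]].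
    exists z. split; [exact Hz |]. intros w [<- | Hw]; [exact Hyz |].
    eapply le_trans; [apply Hlx, Hw | exact Hxz].
Qed.

Lemma compact_le_sup_directed (C : L -> Prop) b :
  compact L b -> directed C -> (exists x, C x) -> le b (sup C) ->
  exists z, C z /\ le b z.
Proof.
  intros Hb Hdir Hne HbC. destruct (Hb C HbC) as [l [HlC Hbl]].
  destruct (directed_list_bound C l Hdir Hne HlC) as [z [Hz Hlz]].
  exists z. split; [exact Hz |]. eapply le_trans; [exact Hbl |]. now apply sup_least.
Qed.

Lemma exists_maximal (P : L -> Prop) c :
  P c ->
  (forall C, (forall x, C x -> P x) -> chain C -> (exists x, C x) ->
     exists u, P u /\ forall x, C x -> le x u) ->
  exists m, P m /\ forall d, P d -> le m d -> d = m.
Proof.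
  intros Hc Hchain.
  set (T := {x | P x}).
  set (R := fun x y : T => boolp.asbool (le (proj1_sig x) (proj1_sig y))).
  destruct (@classical_sets.ZL_preorder T (exist P c Hc) R) as [[m Hm] Hmax].
  - intro x. unfold R. rewrite boolp.asboolE. apply le_refl.
  - intros x y z. unfold R. rewrite !boolp.asboolE. apply le_trans.
  - intros A HA. destruct (classic (exists t0 : T, A t0)) as [[t0 Ht0] | HAe].
    2: { exists (exist P c Hc). intros s Hs. exfalso. apply HAe. now exists s. }
    set (C := fun x => exists y : T, A y /\ proj1_sig y = x).
    destruct (Hchain C) as [u [Hu Hub]].
    + intros x [[y Hy] [_ <-]]. exact Hy.
    + intros x y [x' [Hx' <-]] [y' [Hy' <-]]. unfold R in HA.
      destruct (HA x' y' Hx' Hy') as [H | H]; rewrite boolp.asboolE in H; auto.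
    + exists (proj1_sig t0). now exists t0.
    + exists (exist P u Hu). intros s Hs. unfold R. rewrite boolp.asboolE.
      apply Hub. now exists s.
  - exists m. split; [exact Hm |]. intros d Hd Hmd.
    specialize (Hmax (exist P d Hd)). unfold R in Hmax. rewrite !boolp.asboolE in Hmax.
    apply le_antisym; [now apply Hmax | exact Hmd].
Qed.

End Lattice.

Section MultiplicativeSet.
Variable L : mlattice.
Variable S : L -> Prop.
Hypothesis S_one : S one.
Hypothesis S_mul : forall s t, S s -> S t -> S (mul s t).
Implicit Types a b c d e p q s t u v w x y z : L.

Definition S_saturated c : Prop := forall s w, S s -> le (mul s w) c -> le w c.

Definition S_disjoint c : Prop := forall t, S t -> ~ le t c.

Definition S_decomposable c : Prop :=
  exists ps : list L, (forall p, In p ps -> S_prime L S p) /\ c = inf_list L ps.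

Lemma S_disjoint_proper c : S_disjoint c -> proper L c.
Proof. intros Hc E. apply (Hc one S_one). rewrite E. apply le_refl. Qed.

Lemma prime_S_prime p :
  S_disjoint p -> (forall x y, le (mul x y) p -> le x p \/ le y p) -> S_prime L S p.
Proof.
  intros Hp Hprime. split; [now apply S_disjoint_proper |]. split; [exact Hp |].
  exists one. split; [exact S_one |]. intros x y. rewrite !mul_one. apply Hprime.
Qed.

Lemma S_prime_meet p q v : S_prime L S p -> S v -> le v q -> S_prime L S (meet L p q).
Proof.
  intros [_ [Hp [s [Hs Hps]]]] Hv Hvq.
  assert (Hdisj : S_disjoint (meet L p q)).
  { intros t Ht Htpq. apply (Hp t Ht). eapply le_trans; [exact Htpq | apply meet_le_l]. }
  split; [now apply S_disjoint_proper |]. split; [exact Hdisj |].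
  exists (mul v s). split; [now apply S_mul |].
  assert (Hsx : forall x, le (mul s x) p -> le (mul (mul v s) x) (meet L p q)).
  { intros x Hx. apply le_meet. split.
    - rewrite <- mul_assoc. eapply le_trans; [apply mul_le_r | exact Hx].
    - eapply le_trans; [apply mul_le_l |]. eapply le_trans; [apply mul_le_l | exact Hvq]. }
  intros x y Hxy. destruct (Hps x y) as [Hx | Hy].
  - eapply le_trans; [exact Hxy | apply meet_le_l].
  - left. now apply Hsx.
  - right. now apply Hsx.
Qed.

Lemma colon_S_saturated c x : S_saturated c -> S_saturated (colon L c x).
Proof.
  intros Hc s w Hs Hw. rewrite le_colon in Hw. apply le_colon, (Hc s); [exact Hs |].
  now rewrite mul_assoc.
Qed.

Lemma colon_S_disjoint c x : S_saturated c -> ~ le x c -> S_disjoint (colon L c x).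
Proof. intros Hc Hx t Ht Htx. rewrite le_colon in Htx. exact (Hx (Hc t x Ht Htx)). Qed.

Lemma S_decomposable_meet d e :
  S_decomposable d -> S_decomposable e -> S_decomposable (meet L d e).
Proof.
  intros [l1 [P1 E1]] [l2 [P2 E2]]. exists (l1 ++ l2). split.
  - intros p Hp. apply in_app_or in Hp as [Hp | Hp]; auto.
  - now rewrite inf_list_app, <- E1, <- E2.
Qed.

Definition S_counterexample c : Prop :=
  S_saturated c /\ radical L c /\ S_disjoint c /\ ~ S_decomposable c.

Lemma S_counterexample_extend c :
  S_counterexample c -> exists d, S_counterexample d /\ le c d /\ d <> c.
Proof.
  intros [Hsat [Hrad [Hdisj Hdec]]].
  assert (Hnprime : ~ forall x y, le (mul x y) c -> le x c \/ le y c).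
  { intro Hprime. apply Hdec. exists (c :: nil). split.
    - intros p [<- | []]. now apply prime_S_prime.
    - apply le_antisym; [apply le_inf_list; intros y [<- | []]; apply le_refl |].
      apply inf_list_le. now left. }
  apply not_all_ex_not in Hnprime as [x Hnprime].
  apply not_all_ex_not in Hnprime as [y Hnprime].
  apply imply_to_and in Hnprime as [Hxy Hnxy]. apply not_or_and in Hnxy as [Hx Hy].
  set (d := colon L c x). set (e := colon L c d).
  assert (Hyd : le y d) by (apply le_colon; now rewrite mul_comm).
  assert (Hxe : le x e) by (apply le_colon; rewrite mul_comm; apply colon_mul_le).
  assert (Hnd : ~ le d c) by (intro Hdc; apply Hy; eapply le_trans; eassumption).
  assert (Hd : S_saturated d /\ radical L d /\ S_disjoint d).
  { split; [now apply colon_S_saturated |]. split; [now apply colon_radical |].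
    now apply colon_S_disjoint. }
  assert (He : S_saturated e /\ radical L e /\ S_disjoint e).
  { split; [now apply colon_S_saturated |]. split; [now apply colon_radical |].
    now apply colon_S_disjoint. }
  destruct (classic (S_decomposable d)) as [Hdecd | Hdecd].
  - exists e. split; [repeat split; try apply He |].
    + intro Hdece. apply Hdec. rewrite (radical_eq_meet_colon L c x Hrad).
      now apply S_decomposable_meet.
    + split; [apply le_self_colon |]. intro E. apply Hx. rewrite <- E. exact Hxe.
  - exists d. split; [repeat split; try apply Hd; exact Hdecd |].
    split; [apply le_self_colon |]. intro E. apply Hy. rewrite <- E. exact Hyd.
Qed.

Hypothesis S_compact_all : forall a, S_compact L S a.

Lemma S_compact_sup_directed (C : L -> Prop) :
  directed L C -> (exists x, C x) -> exists s z, S s /\ C z /\ le (mul s (sup C)) z.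
Proof.
  intros Hdir Hne. destruct (S_compact_all (sup C)) as [s [b [Hs [Hb [HsC HbC]]]]].
  destruct (compact_le_sup_directed L C b Hb Hdir Hne HbC) as [z [Hz Hbz]].
  exists s, z. split; [exact Hs |]. split; [exact Hz |]. eapply le_trans; eassumption.
Qed.

Lemma S_saturated_chain_bound (C : L -> Prop) :
  (forall x, C x -> S_saturated x) -> chain L C -> (exists x, C x) ->
  exists z, C z /\ forall x, C x -> le x z.
Proof.
  intros Hsat Hchain Hne.
  destruct (S_compact_sup_directed C (chain_directed L C Hchain) Hne) as [s [z [Hs [Hz HsC]]]].
  exists z. split; [exact Hz |]. intros x Hx.
  eapply le_trans; [apply sup_ub, Hx | exact (Hsat z Hz s _ Hs HsC)].
Qed.

Lemma S_saturated_decomposable c :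
  S_saturated c -> radical L c -> S_disjoint c -> S_decomposable c.
Proof.
  intros Hsat Hrad Hdisj. apply NNPP. intro Hdec.
  destruct (exists_maximal L S_counterexample c) as [m [Hm Hmax]].
  - repeat split; assumption.
  - intros C HC Hchain Hne.
    destruct (S_saturated_chain_bound C) as [z [Hz Hzub]]; try assumption.
    + intros x Hx. apply HC, Hx.
    + exists z. split; [apply HC, Hz | exact Hzub].
  - destruct (S_counterexample_extend m Hm) as [d [Hd [Hmd Hne]]].
    exact (Hne (Hmax d Hd Hmd)).
Qed.

Lemma colon_S_saturated_exists a : exists v, S v /\ S_saturated (colon L a v).
Proof.
  set (C := fun x => exists s, S s /\ x = colon L a s).
  assert (Hdir : directed L C).
  { intros x y [s [Hs ->]] [t [Ht ->]]. exists (colon L a (mul s t)).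
    split; [now exists (mul s t); auto |]. split; [apply colon_le_colon_mul |].
    rewrite (mul_comm L s). apply colon_le_colon_mul. }
  assert (Hne : exists x, C x) by (exists (colon L a one); now exists one).
  destruct (S_compact_sup_directed C Hdir Hne) as [t [z [Ht [[u [Hu ->]] HtC]]]].
  assert (HCv : le (sup C) (colon L a (mul t u))).
  { apply le_colon. rewrite mul_assoc, (mul_comm L (sup C) t).
    eapply le_trans; [apply mul_le_mono_r, HtC | apply colon_mul_le]. }
  exists (mul t u). split; [now apply S_mul |]. intros s w Hs Hw.
  eapply le_trans; [| exact HCv]. apply le_trans with (colon L a (mul s (mul t u))).
  - rewrite le_colon in Hw. apply le_colon. now rewrite mul_assoc, (mul_comm L w s).
  - apply sup_ub. exists (mul s (mul t u)). auto.
Qed.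

End MultiplicativeSet.

Theorem mainTheorem11 (L : mlattice) (S : L -> Prop)
  (HS : mult_closed L S) (HN : S_noetherian L S)
  (H1 : S one) (H0 : ~ S (bot L)) :
  forall a : L, a = rad L a -> (forall t, S t -> ~ le t a) ->
  exists ps : list L, (forall p, In p ps -> S_prime L S p) /\ a = inf_list L ps.
Proof.
  intros a Ha Hdisj.
  destruct HS as [_ [_ Hmul]].
  destruct HN as [[Hmod [_ [Hcg _]]] Hcpt].
  assert (Hrad : radical L a) by now apply radical_of_eq_rad.
  destruct (colon_S_saturated_exists L S H1 Hmul Hcpt a) as [v [Hv Hsat]].
  assert (Hdisjv : S_disjoint L S (colon L a v)).
  { intros t Ht Htv. rewrite le_colon in Htv. exact (Hdisj _ (Hmul t v Ht Hv) Htv). }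
  destruct (S_saturated_decomposable L S H1 Hcpt (colon L a v) Hsat
              (colon_radical L a v Hrad) Hdisjv) as [[| p0 ps] [Hps Hc]].
  { exfalso. apply (Hdisjv one H1). rewrite Hc. apply le_inf_list. intros y []. }
  exists (map (fun p => meet L p (join L a v)) (p0 :: ps)). split.
  - intros q Hq. apply in_map_iff in Hq as [p [<- Hp]].
    apply (S_prime_meet L S H1 Hmul p _ v (Hps p Hp) Hv), le_join_r.
  - rewrite inf_list_map_meet, <- Hc. now apply radical_eq_meet_colon_join.
Qed.
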